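(* Assume (MA1), (MA2), (MA3) and (MA4) hold, and let the sequences be generated by Algorithm R2N. If the algorithm generates only finitely many successful iterations, then there is $x^*\in\mathbb{R}^n$ such that $x_k=x^*$ for all sufficiently large $k$, and \[ \liminf_{k\to\infty}\nu_k^{-1/2}\xi_{cp}(x_k,\nu_k^{-1})^{1/2}=0 . \]
   Context: Setting: $f:\mathbb{R}^n\to\mathbb{R}$ continuously differentiable, $h:\mathbb{R}^n\to\mathbb{R}\cup\{+\infty\}$ proper lower semicontinuous; $\partial$ = limiting subdifferential; $\|\cdot\|$ Euclidean norm on vectors, spectral norm on matrices. A function $g$ is prox-bounded if there exist $\nu>0$, $x$ with $\inf_y g(y)+\frac1{2\nu}\|y-x\|^2>-\infty$; its threshold is the supremum of such $\nu$. For each $x$, $B(x)$ is symmetric and $\psi(\cdot;x):\mathbb{R}^n\to\mathbb{R}\cup\{+\infty\}$. $\varphi(s;x)=f(x)+\nabla f(x)^Ts+\tfrac12s^TB(x)s$, $m(s;x,\sigma)=\varphi(s;x)+\tfrac12\sigma\|s\|^2+\psi(s;x)$; $\varphi_{cp}(s;x)=f(x)+\nabla f(x)^Ts$, $m_{cp}(s;x,\nu^{-1})=\varphi_{cp}(s;x)+\tfrac12\nu^{-1}\|s\|^2+\psi(s;x)$, $P_{cp}(x,\nu^{-1})=\operatorname{argmin}_s m_{cp}(s;x,\nu^{-1})$, and for $s_{cp}\in P_{cp}(x,\nu^{-1})$, $\xi_{cp}(x,\nu^{-1})=f(x)+h(x)-(\varphi_{cp}(s_{cp};x)+\psi(s_{cp};x))$.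 (MA1): for every $x$, $\psi(\cdot;x)$ is proper, lsc, prox-bounded with threshold $\lambda_x$, $\psi(0;x)=h(x)$, $\partial\psi(0;x)=\partial h(x)$. (MA2): there is $\lambda\in(0,+\infty]$ with $\lambda_x\ge\lambda$ for all $x$ (convention $1/\infty=0$). (MA3): there is a function $\omega:[0,\infty)\to[0,\infty)$ with $\omega(t)/t\to0$ as $t\downarrow0$ such that $|h(x_k+s_k)-\psi(s_k;x_k)|\le\omega(\|s_k\|)$ for all $k$. (MA4): $\sum_{k\in\mathbb N}1/r_k=+\infty$, where $r_k:=\max_{0\le j\le k}\|B_j\|+1$. Algorithm R2N: constants $0<\theta_1<1<\theta_2$, $0<\eta_1\le\eta_2<1$, $0<\gamma_3\le1<\gamma_1\le\gamma_2$; $x_0$ with $h(x_0)<\infty$, $\sigma_0>0$. For $k=0,1,\dots$: choose symmetric $B_k=B(x_k)$; set $\nu_k=\theta_1/(\|B_k\|+\sigma_k)$; compute $s_{k,cp}\in P_{cp}(x_k,\nu_k^{-1})$ and $\xi_{cp}(x_k,\nu_k^{-1})$ (using $s_{k,cp}$); compute $s_k$ with $m(s_k;x_k,\sigma_k)\le m(s_{k,cp};x_k,\sigma_k)$; if $\|s_k\|>\theta_2\|s_{k,cp}\|$, reset $s_k=s_{k,cp}$; compute $\rho_k=\frac{(f+h)(x_k)-(f+h)(x_k+s_k)}{\varphi(0;x_k)+\psi(0;x_k)-\varphi(s_k;x_k)-\psi(s_k;x_k)}$ (extended arithmetic: $\pm\infty\cdot0=0$, $(\pm\infty)/(\pm\infty)=0$);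 if $\rho_k\ge\eta_1$ set $x_{k+1}=x_k+s_k$, else $x_{k+1}=x_k$; choose $\sigma_{k+1}\in[\gamma_3\sigma_k,\sigma_k]$ if $\rho_k\ge\eta_2$ (very successful), $\sigma_{k+1}\in[\sigma_k,\gamma_1\sigma_k]$ if $\eta_1\le\rho_k<\eta_2$, $\sigma_{k+1}\in[\gamma_1\sigma_k,\gamma_2\sigma_k]$ if $\rho_k<\eta_1$ (unsuccessful). $\mathcal S=\{k:\rho_k\ge\eta_1\}$ (successful iterations), $\mathcal S_k=\{i\in\mathcal S:i\le k\}$, $\mathcal U=\mathbb N\setminus\mathcal S$, $\mathcal U_k=\{i\in\mathcal U:i\le k\}$. *)

From HB Require Import structures.
From mathcomp Require Import all_boot all_order all_algebra.
From mathcomp Require Import all_classical all_reals all_analysis.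
Set Implicit Arguments. Unset Strict Implicit. Unset Printing Implicit Defensive.
Import Order.TTheory GRing.Theory Num.Theory.
Import numFieldNormedType.Exports.
Local Open Scope classical_set_scope.
Local Open Scope ring_scope.

Section Defs.
Variables (R : realType) (n : nat).
Local Notation vec := 'cV[R]_n.
Local Notation mat := 'M[R]_n.

Definition dotp (u v : vec) : R := \sum_i u i 0 * v i 0.
Definition enorm (v : vec) : R := Num.sqrt (dotp v v).

Definition snorm (B : mat) : R :=
  sup [set enorm (B *m v) | v in [set v : vec | enorm v <= 1]].

Definition grad (f : vec -> R) (x : vec) : vec :=
  \col_i ('d f x (delta_mx i 0 : vec)).

Definition cont_diff (f : vec -> R) : Prop :=
  (forall x, differentiable f x) /\ continuous (grad f).

Definition eproper (g : vec -> \bar R) : Prop :=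
  (forall y, g y != -oo%E) /\ (exists y, g y != +oo%E).

Definition elsc (g : vec -> \bar R) : Prop :=
  forall y (a : R), (a%:E < g y)%E -> \forall z \near y, (a%:E < g z)%E.

Definition prox_bounded_at (g : vec -> \bar R) (nu : R) : Prop :=
  0 < nu /\ exists x : vec,
    (-oo < ereal_inf [set (g y + ((2 * nu)^-1 * enorm (y - x) ^+ 2)%:E)%E
                     | y in [set: vec]])%E.

Definition prox_bounded (g : vec -> \bar R) : Prop :=
  exists nu, prox_bounded_at g nu.

Definition prox_threshold (g : vec -> \bar R) : \bar R :=
  ereal_sup [set nu%:E | nu in prox_bounded_at g].

Definition frechet_subgrad (g : vec -> \bar R) (x v : vec) : Prop :=
  g x \is a fin_num /\
  forall eps : R, 0 < eps -> \forall z \near x,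
    (g x + (dotp v (z - x) - eps * enorm (z - x))%:E <= g z)%E.

Definition lim_subdiff (g : vec -> \bar R) (x : vec) : set vec :=
  [set v | g x \is a fin_num /\
     exists (xs vs : nat -> vec),
       xs @ \oo --> x /\ (fun k => g (xs k)) @ \oo --> g x /\
       (forall k, frechet_subgrad g (xs k) (vs k)) /\ vs @ \oo --> v].

Definition phi (f : vec -> R) (B : vec -> mat) (x s : vec) : R :=
  f x + dotp (grad f x) s + 2^-1 * dotp s (B x *m s).

Definition mR2N (f : vec -> R) (B : vec -> mat) (psi : vec -> vec -> \bar R)
  (sigma : R) (x s : vec) : \bar R :=
  ((phi f B x s + 2^-1 * sigma * enorm s ^+ 2)%:E + psi x s)%E.

Definition phi_cp (f : vec -> R) (x s : vec) : R := f x + dotp (grad f x) s.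

Definition m_cp (f : vec -> R) (psi : vec -> vec -> \bar R)
  (nuinv : R) (x s : vec) : \bar R :=
  ((phi_cp f x s + 2^-1 * nuinv * enorm s ^+ 2)%:E + psi x s)%E.

Definition P_cp (f : vec -> R) (psi : vec -> vec -> \bar R) (nuinv : R) (x : vec)
  : set vec := [set s | forall t, (m_cp f psi nuinv x s <= m_cp f psi nuinv x t)%E].

Definition xi_cp (f : vec -> R) (h : vec -> \bar R) (psi : vec -> vec -> \bar R)
  (x scp : vec) : \bar R :=
  ((f x)%:E + h x - ((phi_cp f x scp)%:E + psi x scp))%E.

(* division in the ratio rho_k, with the conventions
   (+-oo) * 0 = 0 and (+-oo)/(+-oo) = 0 (hence a/(+-oo) = 0) *)
Definition rdiv (a b : \bar R) : \bar R :=
  match b with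
  | r%:E => (a * (r^-1)%:E)%E
  | _ => 0%E
  end.

Definition rho (f : vec -> R) (h : vec -> \bar R) (B : vec -> mat)
  (psi : vec -> vec -> \bar R) (x s : vec) : \bar R :=
  rdiv ((f x)%:E + h x - ((f (x + s)%R)%:E + h (x + s)%R))%E
       ((phi f B x 0%R)%:E + psi x 0%R - ((phi f B x s)%:E + psi x s))%E.

Definition rk (Bs : nat -> mat) (k : nat) : R :=
  \big[Num.max/0]_(j < k.+1) snorm (Bs j) + 1.

(* Square root on extended reals (only applied to nonnegative values) *)
Definition esqrt (a : \bar R) : \bar R :=
  match a with
  | r%:E => (Num.sqrt r)%:E
  | +oo%E => +oo%E
  | -oo%E => 0%E
  end.

End Defs.

(* After the last successful iteration the iterate is frozen at some x*, and every
   later iteration multiplies sigma_k by at least gamma1 > 1, so sigma_k -> +oo and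
   nu_k -> 0.  Suppose nu_k^(-1/2) xi_cp^(1/2) stayed above eps > 0.  Prox-boundedness
   of psi(x*; .) gives ||s_cp||^2 = O(nu_k), so the steps become small.  On small
   steps Taylor's formula and (MA3) bound the gap between the actual and the
   predicted decrease by o(||s||) + O(||s||^2), whereas the Cauchy decrease bounds the
   predicted decrease below by a multiple of xi_cp > eps^2 nu_k.  Hence rho_k >= eta1
   once sigma_k is large, contradicting that iteration k is unsuccessful. *)

From HB Require Import structures.
From mathcomp Require Import all_boot all_order all_algebra.
From mathcomp Require Import all_classical all_reals all_analysis.
From mathcomp Require Import ring lra finmap.
Import Order.TTheory GRing.Theory Num.Theory.
Import numFieldNormedType.Exports.
Local Open Scope classical_set_scope.
Local Open Scope ring_scope.

Section EuclideanNorm.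
Context {R : realType} {n : nat}.
Implicit Types (v y z : 'cV[R]_n) (M : 'M[R]_n).

Lemma dotp0r v : dotp v 0 = 0.
Proof. by rewrite /dotp big1 // => i _; rewrite mxE mulr0. Qed.

Lemma dotp0l v : dotp 0 v = 0.
Proof. by rewrite /dotp big1 // => i _; rewrite mxE mul0r. Qed.

Lemma dotp_ge0 v : 0 <= dotp v v.
Proof. by apply: sumr_ge0 => i _; rewrite -expr2 sqr_ge0. Qed.

Lemma sqr_le_dotp v i : v i 0 ^+ 2 <= dotp v v.
Proof.
rewrite /dotp (bigD1 i) //= -expr2 lerDl.
by apply: sumr_ge0 => j _; rewrite -expr2 sqr_ge0.
Qed.

Lemma enorm_ge0 v : 0 <= enorm v.
Proof. exact: sqrtr_ge0. Qed.

Lemma enorm_sqr v : enorm v ^+ 2 = dotp v v.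
Proof. by rewrite /enorm sqr_sqrtr // dotp_ge0. Qed.

Lemma enorm0 : enorm (0 : 'cV[R]_n) = 0.
Proof. by rewrite /enorm dotp0r sqrtr0. Qed.

Lemma enorm_eq0 v : enorm v = 0 -> v = 0.
Proof.
move=> v0; have /eqP : dotp v v = 0 by rewrite -enorm_sqr v0 expr0n.
rewrite psumr_eq0 => [/allP vi0|i _]; last by rewrite -expr2 sqr_ge0.
apply/matrixP => i j; rewrite (ord1 j) mxE.
by apply/eqP; rewrite -sqrf_eq0 expr2; apply: (implyP (vi0 i (mem_index_enum i))).
Qed.

Lemma mxnorm_le_enorm v : `|v| <= enorm v.
Proof.
rewrite (_ : `|v| = mx_norm v) // mx_normrE; apply: bigmax_le => [|[i j] _]; first exact: enorm_ge0.
rewrite /= (ord1 j) -(@ler_pXn2r _ 2) //= ?nnegrE ?enorm_ge0 //.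
by rewrite enorm_sqr real_normK ?num_real // sqr_le_dotp.
Qed.

Lemma dotp_subr_le y z : dotp (y - z) (y - z) <= 2 * dotp y y + 2 * dotp z z.
Proof.
rewrite /dotp !mulr_sumr -big_split /=; apply: ler_sum => i _.
rewrite !mxE; have := sqr_ge0 (y i 0 + z i 0); rewrite -!expr2; nra.
Qed.

Lemma dotp_ge_sqr_div4 y z : - dotp y z <= dotp z z + dotp y y / 4.
Proof.
rewrite /dotp -sumrN mulr_suml -big_split /=; apply: ler_sum => i _.
have := sqr_ge0 (z i 0 + y i 0 / 2); rewrite -!expr2; nra.
Qed.

(* A crude bound on the spectral norm; it suffices since sigma_k eventually dominates it. *)
Definition sum_abs_entries M : R := \sum_i \sum_j `|M i j|.

Lemma sum_abs_entries_ge0 M : 0 <= sum_abs_entries M.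
Proof. by apply: sumr_ge0 => i _; apply: sumr_ge0. Qed.

Lemma abs_quad_le M v : `|dotp v (M *m v)| <= sum_abs_entries M * dotp v v.
Proof.
rewrite /dotp /sum_abs_entries mulr_suml; apply: le_trans (ler_norm_sum _ _ _) _.
apply: ler_sum => i _; rewrite mxE mulr_sumr mulr_suml.
apply: le_trans (ler_norm_sum _ _ _) _; apply: ler_sum => j _.
rewrite !normrM mulrCA ler_wpM2l // -[\sum_(k < n) _]/(dotp v v).
have := sqr_le_dotp v i; have := sqr_le_dotp v j.
have := sqr_ge0 (`|v i 0| - `|v j 0|).
rewrite -[v i 0 ^+ 2]real_normK ?num_real // -[v j 0 ^+ 2]real_normK ?num_real //.
nra.
Qed.

End EuclideanNorm.

Lemma grad_dotp (R : realType) n (f : 'cV[R]_n -> R) x s :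
  dotp (grad f x) s = 'd f x s.
Proof.
rewrite {2}(matrix_sum_delta s) linear_sum /dotp.
by apply: eq_bigr => i _; rewrite big_ord1 linearZ /= mxE mulrC (ord1 (0 : 'I_1)).
Qed.

Lemma diff_remainder_le {R : realType} {V W : normedModType R} {f : V -> W} {x : V} :
  differentiable f x -> forall e : R, 0 < e -> exists2 d : R, 0 < d &
  forall s, `|s| < d -> `|f (x + s) - f x - 'd f x s| <= e * `|s|.
Proof.
move=> /diff_locally fx e e0; have /nbhs_norm0P [d d0 Hd] := eqadd_some_oP fx e0.
exists d => // s /Hd /=; rewrite addrC !fctE /=.
by rewrite opprD addrC (addrC s) addrA.
Qed.

Lemma littleo_right_le {R : realType} {omega : R -> R} :
  (fun t => omega t / t) @ 0^'+ --> 0 ->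
  forall e : R, 0 < e -> exists2 d : R, 0 < d & forall t, 0 < t -> t < d -> omega t <= e * t.
Proof.
move=> om_o e e0; have /(_ (at_right_proper_filter _)) := cvgr_dist_lt _ _ om_o _ e0.
rewrite near_withinE => /nbhs_norm0P [d d0 Hd]; exists d => // t t0 td.
have := Hd t; rewrite /= sub0r normrN gtr0_norm // => /(_ td t0).
by move/(le_lt_trans (ler_norm _)); rewrite ltr_pdivrMr // mulrC => /ltW.
Qed.

Lemma fin_of_close {R : realType} {a : \bar R} {p om : R} :
  (a <= p%:E + om%:E)%E -> (p%:E <= a + om%:E)%E ->
  exists2 r : R, a = r%:E & `|r - p| <= om.
Proof.
case: a => [r| |] //=; rewrite -?EFinD !lee_fin => rp pr.
by exists r => //; rewrite ler_norml; apply/andP; split; lra.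
Qed.

Lemma esqrt_ge0 {R : realType} (a : \bar R) : (0 <= esqrt a)%E.
Proof. by case: a => //= r; rewrite lee_fin sqrtr_ge0. Qed.

Lemma ratio_ge_of_small_error {R : realFieldType} {eta th2 eps e1 kap C w xi D N S q : R} :
  eta < 1 -> 0 < kap -> 0 < th2 -> 0 < eps -> 0 < w -> 0 <= C -> 0 <= S -> 0 <= q ->
  kap * xi <= (1 - eta) * D -> w * q <= 2 * xi -> S ^+ 2 <= th2 ^+ 2 * q ->
  eps ^+ 2 < w * xi -> 4 * C * th2 ^+ 2 <= kap * w -> 8 * th2 * e1 <= kap * eps ->
  `|N - D| <= 2 * e1 * S + C * S ^+ 2 / 2 ->
  0 < D /\ eta * D <= N.
Proof.
move=> eta_lt1 kap0 th20 eps0 w0 C0 S0 q0 dec cauchy Sq far Cw e1eps err.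
have xi0 : 0 < xi by nra.
have quad_err : C * S ^+ 2 / 2 <= kap * xi / 4.
  have : C * S ^+ 2 <= C * (th2 ^+ 2 * q) by rewrite ler_wpM2l.
  have : 4 * C * th2 ^+ 2 * q <= kap * w * q by rewrite ler_wpM2r.
  nra.
(* S^2 <= th2^2 q <= 2 th2^2 xi / w < 2 th2^2 xi^2 / eps^2 *)
have epsS : eps * S <= 2 * th2 * xi.
  have [epsS0 xi20] : 0 <= eps * S /\ 0 <= 2 * th2 * xi by split; nra.
  rewrite -(@ler_pXn2r _ 2) ?nnegrE //.
  have h1 : eps ^+ 2 * S ^+ 2 <= eps ^+ 2 * (th2 ^+ 2 * q) by rewrite ler_wpM2l ?sqr_ge0.
  have h2 : eps ^+ 2 * q <= w * xi * q by rewrite ler_wpM2r // ltW.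
  have h3 : xi * (w * q) <= xi * (2 * xi) by rewrite ler_wpM2l // ltW.
  have h4 : th2 ^+ 2 * (eps ^+ 2 * q) <= th2 ^+ 2 * (2 * xi * xi).
    by rewrite ler_wpM2l ?sqr_ge0 //; lra.
  have := sqr_ge0 (th2 * xi); rewrite !exprMn; lra.
have lin_err : 2 * e1 * S <= kap * xi / 2.
  have : 8 * th2 * e1 * S <= kap * eps * S by rewrite ler_wpM2r.
  nra.
have kapxi0 : 0 < kap * xi by rewrite mulr_gt0.
split; first by rewrite -(@pmulr_rgt0 _ (1 - eta)) ?subr_gt0; lra.
by move: err; rewrite ler_norml => /andP[+ _]; lra.
Qed.

Lemma sqr_lt_of_lt_sqrt_mul {R : rcfType} {eps w xi : R} :
  0 < eps -> 0 <= w -> eps < Num.sqrt w * Num.sqrt xi -> eps ^+ 2 < w * xi.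
Proof.
move=> eps0 w0; rewrite -sqrtrM // => far.
have wxi0 : 0 < w * xi by rewrite -sqrtr_gt0 (lt_trans eps0 far).
by rewrite -ltr_sqrt // sqrtr_sqr gtr0_norm.
Qed.

Lemma lt_of_sqr_le_scaled {R : realFieldType} {S q w A th2 d : R} :
  0 <= S -> 0 < d -> 0 < w -> w * q <= A -> S ^+ 2 <= th2 ^+ 2 * q ->
  th2 ^+ 2 * `|A| / d ^+ 2 + 1 <= w -> S < d.
Proof.
move=> S0 d0 w0 wqA Sq Aw.
have wS : w * S ^+ 2 <= th2 ^+ 2 * (w * q).
  by rewrite [X in _ <= X]mulrCA ler_wpM2l // ltW.
have qA : th2 ^+ 2 * (w * q) <= th2 ^+ 2 * `|A|.
  by rewrite ler_wpM2l ?sqr_ge0 // (le_trans wqA) ?ler_norm.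
have d2 : 0 < d ^+ 2 by rewrite exprn_gt0.
have Ad : th2 ^+ 2 * `|A| <= (w - 1) * d ^+ 2 by rewrite -ler_pdivrMr //; lra.
have : w * S ^+ 2 < w * d ^+ 2 by lra.
by rewrite ltr_pM2l // ltr_pXn2r ?nnegrE // ltW.
Qed.

Lemma finite_set_nat_near_notin {A : set nat} :
  finite_set A -> \forall k \near \oo, ~ A k.
Proof.
move/finite_fsetP => [F FE]; exists (\max_(i <- finmap.enum_fset F) i).+1 => // k.
rewrite /= ltnNge => /negP Fk Ak; apply: Fk.
have kF : [set` F] k by rewrite -FE.
exact: (leq_bigmax_seq k kF).
Qed.

Lemma near_stationary (T : Type) (u : nat -> T) :
  (\forall k \near \oo, u k.+1 = u k) -> exists l, \forall k \near \oo, u k = l.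
Proof.
move=> [N _ uS]; exists (u N); exists N => // k /= /subnK <-.
elim: (k - N)%N => [//|j IH].
by rewrite addSn (uS _ (leq_addl _ _)).
Qed.

Lemma geometric_growth_cvgy {R : realType} {u : nat -> R} {a : R} :
  1 < a -> (forall k, 0 < u k) -> (\forall k \near \oo, a * u k <= u k.+1) ->
  u @ \oo --> +oo.
Proof.
move=> a1 u0 [N _ uS]; set d := (a - 1) * u N.
have d0 : 0 < d by rewrite mulr_gt0 ?u0 // subr_gt0.
have linear_growth j : u N + j%:R * d <= u (j + N)%N.
  elim: j => [|j IH]; first by rewrite mul0r addr0.
  have jd0 : 0 <= j%:R * d by rewrite mulr_ge0 // ltW.
  have : d <= (a - 1) * u (j + N)%N by apply: ler_wpM2l; [rewrite subr_ge0 ltW | lra].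
  have := uS (j + N)%N (leq_addl _ _); rewrite addSn -natr1; lra.
apply/cvgryPge => M; set j0 := Num.Def.archi_bound (`|M| / d).
exists (j0 + N)%N => // k /= j0k.
have Nk : (N <= k)%N := leq_trans (leq_addl _ _) j0k.
rewrite -(subnK Nk); apply: le_trans (linear_growth _).
have : j0%:R <= (k - N)%:R :> R by rewrite ler_nat leq_subRL // addnC.
have := archi_boundP (divr_ge0 (normr_ge0 M) (ltW d0)).
rewrite ltr_pdivrMr // -/j0; have := ler_norm M; have := u0 N; nra.
Qed.

Lemma limn_einf_eq0 (R : realType) (u : (\bar R)^nat) :
  (forall k, (0 <= u k)%E) ->
  (forall e : R, 0 < e -> ~ \forall k \near \oo, (e%:E < u k)%E) ->
  limn_einf u = 0%E.
Proof.
move=> u0 u_small; rewrite limn_einf_lim (cvg_lim _ (@cvg_einfs_sup _ u)) //.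
apply/eqP; rewrite eq_le; apply/andP; split; last first.
  apply: le_trans (ereal_sup_ubound _); last by exists 0%N.
  by apply: le_ereal_inf_tmp => _ [k _ <-]; exact: u0.
apply: ge_ereal_sup => _ [N _ <-] /=.
apply/lee_addgt0Pr => e e0; rewrite add0e.
have [[k Nk uk]|no_small] := pselect (exists2 k, (N <= k)%N & (u k <= e%:E)%E).
  by apply: le_trans uk; apply: ereal_inf_lbound; exists k.
exfalso; apply: (u_small e e0); exists N => // k /= Nk.
by rewrite ltNge; apply/negP => uk; apply: no_small; exists k.
Qed.

Section LocalModel.
Context {R : realType} {n : nat}.
Context {f : 'cV[R]_n -> R} {h : 'cV[R]_n -> \bar R} {B : 'cV[R]_n -> 'M[R]_n}.
Context {psi : 'cV[R]_n -> 'cV[R]_n -> \bar R} {xs : 'cV[R]_n} {h0 : R}.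
Hypothesis psi_proper : eproper (psi xs).
Hypothesis psi0 : psi xs 0 = h xs.
Hypothesis hxs : h xs = h0%:E.

Local Notation g := (grad f xs).

Lemma cauchy_point_decrease {w scp} : P_cp f psi w xs scp ->
  exists2 pc : R, psi xs scp = pc%:E &
    dotp g scp + 2^-1 * w * enorm scp ^+ 2 + pc <= h0.
Proof.
move=> /(_ 0); rewrite /m_cp /phi_cp psi0 hxs dotp0r enorm0 expr0n /= mulr0 !addr0.
case: (psi xs scp) (psi_proper.1 scp) => [pc _| //|//]; rewrite -!EFinD lee_fin => Hpc.
by exists pc => //; lra.
Qed.

Lemma model_step_value {sig s scp pc} : psi xs scp = pc%:E ->
  (mR2N f B psi sig xs s <= mR2N f B psi sig xs scp)%E ->
  exists2 ps : R, psi xs s = ps%:E &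
    dotp g s + 2^-1 * dotp s (B xs *m s) + 2^-1 * sig * enorm s ^+ 2 + ps <=
    dotp g scp + 2^-1 * dotp scp (B xs *m scp) + 2^-1 * sig * enorm scp ^+ 2 + pc.
Proof.
rewrite /mR2N /phi => ->.
case: (psi xs s) (psi_proper.1 s) => [ps _| //|//]; rewrite -!EFinD lee_fin => Hps.
by exists ps => //; lra.
Qed.

Lemma xi_cp_fin {scp pc} : psi xs scp = pc%:E ->
  xi_cp f h psi xs scp = (h0 - dotp g scp - pc)%:E.
Proof. by rewrite /xi_cp /phi_cp hxs => ->; congr EFin; ring. Qed.

Lemma rho_fin {s ps hs} : psi xs s = ps%:E -> h (xs + s) = hs%:E ->
  rho f h B psi xs s =
  ((f xs + h0 - (f (xs + s) + hs)) /
   (h0 - (dotp g s + 2^-1 * dotp s (B xs *m s)) - ps))%:E.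
Proof.
move=> psE hsE; rewrite /rho /phi psi0 hxs psE hsE dotp0l dotp0r /= -!EFinD /=.
rewrite -EFinM; congr (EFin (_ / _)); ring.
Qed.

Lemma prox_lower_quadratic : prox_bounded (psi xs) ->
  exists mu z c0, 0 < mu /\
    forall y, (c0%:E <= psi xs y + ((2 * mu)^-1 * enorm (y - z) ^+ 2)%:E)%E.
Proof.
move=> [mu [mu0 [z]]]; set I := ereal_inf _ => I_fin.
exists mu, z, (fine I); split => // y; apply: (@le_trans _ _ I).
  by case: I I_fin => //= r; rewrite leey.
by apply: ereal_inf_lbound; exists y.
Qed.

Lemma cauchy_point_sqr_le : prox_bounded (psi xs) ->
  exists A W, forall w scp, W <= w -> P_cp f psi w xs scp -> w * enorm scp ^+ 2 <= A.
Proof.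
move=> /prox_lower_quadratic [mu [z [c0 [mu0 psi_ge]]]].
exists (4 * (h0 + dotp g g / 4 - c0 + dotp z z / mu)), (4 * (1 + mu^-1)).
move=> w scp Ww /cauchy_point_decrease [pc pcE Hcauchy].
have := psi_ge scp; rewrite pcE -EFinD lee_fin => Hprox.
set q := enorm scp ^+ 2 in Hcauchy *; have q0 : 0 <= q := sqr_ge0 _.
have Hquad : enorm (scp - z) ^+ 2 <= 2 * q + 2 * dotp z z.
  by rewrite /q !enorm_sqr dotp_subr_le.
have Hlin := dotp_ge_sqr_div4 g scp; rewrite -enorm_sqr -/q in Hlin.
have mui0 : 0 < mu^-1 by rewrite invr_gt0.
have Hprox' : c0 - (q + dotp z z) * mu^-1 <= pc.
  suff : (2 * mu)^-1 * enorm (scp - z) ^+ 2 <= (q + dotp z z) * mu^-1 by lra.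
  by rewrite invfM mulrAC; apply: ler_wpM2r; [exact: ltW | lra].
have : (4 * (1 + mu^-1)) * q <= w * q by apply: ler_wpM2r.
nra.
Qed.

Local Notation C := (sum_abs_entries (B xs)).

Lemma model_decrease_ge {theta1 w sig s scp pc ps} : 0 <= theta1 ->
  dotp g scp + 2^-1 * w * enorm scp ^+ 2 + pc <= h0 ->
  dotp g s + 2^-1 * dotp s (B xs *m s) + 2^-1 * sig * enorm s ^+ 2 + ps <=
    dotp g scp + 2^-1 * dotp scp (B xs *m scp) + 2^-1 * sig * enorm scp ^+ 2 + pc ->
  0 <= sig -> C + sig <= (1 + theta1) / 2 * w ->
  (1 - theta1) / 2 * (h0 - dotp g scp - pc) <=
    h0 - (dotp g s + 2^-1 * dotp s (B xs *m s)) - ps.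
Proof.
move=> theta1_ge0 cauchy step sig0 Cw; set qc := enorm scp ^+ 2 in cauchy step *.
have Qc : dotp scp (B xs *m scp) <= C * qc.
  by rewrite /qc enorm_sqr; apply: le_trans (ler_norm _) (abs_quad_le _ _).
have qs0 : 0 <= sig * enorm s ^+ 2 by rewrite mulr_ge0 ?sqr_ge0.
have Cqc : (C + sig) * qc <= (1 + theta1) / 2 * w * qc by rewrite ler_wpM2r ?sqr_ge0.
have wqc : (1 + theta1) / 2 * (w * qc) <= (1 + theta1) / 2 * (2 * (h0 - dotp g scp - pc)).
  by rewrite ler_wpM2l; lra.
lra.
Qed.

Lemma model_error_le {omega : R -> R} : differentiable f xs ->
  (fun t => omega t / t) @ 0^'+ --> 0 ->
  forall e : R, 0 < e -> exists2 d : R, 0 < d & forall s ps hs, enorm s < d ->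
  psi xs s = ps%:E -> h (xs + s) = hs%:E -> `|hs - ps| <= omega (enorm s) ->
  `|(f xs + h0 - (f (xs + s) + hs)) - (h0 - (dotp g s + 2^-1 * dotp s (B xs *m s)) - ps)|
    <= 2 * e * enorm s + C * enorm s ^+ 2 / 2.
Proof.
move=> f_diff om_o e e0.
have [dT dT0 taylor] := diff_remainder_le f_diff _ e0.
have [dW dW0 om_le] := littleo_right_le om_o _ e0.
exists (Num.min dT dW) => [|s ps hs]; first by rewrite lt_min dT0 dW0.
rewrite lt_min => /andP[sT sW] psE hsE gap.
have err_f : `|f (xs + s) - f xs - dotp g s| <= e * enorm s.
  rewrite grad_dotp; apply: le_trans (taylor s _) _.
    exact: le_lt_trans (mxnorm_le_enorm _) sT.
  by rewrite ler_wpM2l ?mxnorm_le_enorm // ltW.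
have err_h : `|hs - ps| <= e * enorm s.
  have [s0|spos] := eqVneq (enorm s) 0.
    have sE := enorm_eq0 _ s0.
    have [->] : hs%:E = ps%:E by rewrite -hsE -psE sE addr0 psi0.
    by rewrite subrr normr0 s0 mulr0.
  by apply: le_trans gap (om_le _ _ sW); rewrite lt0r spos enorm_ge0.
have Qs := abs_quad_le (B xs) s; rewrite -enorm_sqr in Qs.
set a := f (xs + s) - f xs - dotp g s in err_f.
have -> : f xs + h0 - (f (xs + s) + hs) - (h0 - (dotp g s + 2^-1 * dotp s (B xs *m s)) - ps)
  = - a - (hs - ps) + 2^-1 * dotp s (B xs *m s) by rewrite /a; ring.
apply: le_trans (ler_normD _ _) _; rewrite normrM ger0_norm ?invr_ge0 //.
apply: le_trans (lerD (ler_normB _ _) (ler_wpM2l _ Qs)) _; rewrite ?invr_ge0 //.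
rewrite normrN; lra.
Qed.

Lemma rho_ge_of_large_regularization {theta1 theta2 eta1 eps : R} {omega : R -> R} :
  0 < theta1 -> theta1 < 1 -> 1 < theta2 -> 0 < eta1 -> eta1 < 1 -> 0 < eps ->
  differentiable f xs -> prox_bounded (psi xs) ->
  (fun t => omega t / t) @ 0^'+ --> 0 ->
  exists W, forall w sig scp s, W <= w -> 0 <= sig -> C + sig <= (1 + theta1) / 2 * w ->
  P_cp f psi w xs scp ->
  (mR2N f B psi sig xs s <= mR2N f B psi sig xs scp)%E ->
  enorm s <= theta2 * enorm scp ->
  (h (xs + s)%R <= psi xs s + (omega (enorm s))%:E)%E ->
  (psi xs s <= h (xs + s)%R + (omega (enorm s))%:E)%E ->
  (eps%:E < (Num.sqrt w)%:E * esqrt (xi_cp f h psi xs scp))%E ->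
  (eta1%:E <= rho f h B psi xs s)%E.
Proof.
move=> theta1_gt0 theta1_lt1 theta2_gt1 eta1_gt0 eta1_lt1 eps0 f_diff psi_prox omega_o.
(* The model decrease is at least (1 - theta1)/2 xi_cp; the errors may eat a (1 - eta1) share. *)
set kap := (1 - eta1) * ((1 - theta1) / 2).
have kap0 : 0 < kap by apply: mulr_gt0; lra.
have theta20 : 0 < theta2 by lra.
set e1 := kap * eps / (8 * theta2).
have e1E : 8 * theta2 * e1 <= kap * eps by rewrite /e1 mulrC divfK // mulf_neq0 // gt_eqF.
have e10 : 0 < e1 by rewrite divr_gt0 ?mulr_gt0 //; lra.
have [d d0 err] := model_error_le f_diff omega_o _ e10.
have [A [W0 cauchy_sqr]] := cauchy_point_sqr_le psi_prox.
(* Large enough for the bound on the Cauchy step, for the curvature term, and to keep the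
   step inside the radius d where the first-order errors are below e1 * ||s||. *)
exists (Num.max (Num.max W0 1)
  (Num.max (4 * C * theta2 ^+ 2 / kap) (theta2 ^+ 2 * `|A| / d ^+ 2 + 1))).
move=> w sig scp s; rewrite !ge_max => /and3P[/andP[W0w w1] Cw Aw].
move=> sig0 Csig Pcp step Ss hs_le ps_le far.
have w0 : 0 < w by lra.
have [pc pcE cauchy] := cauchy_point_decrease Pcp.
have [ps psE stepv] := model_step_value pcE step.
rewrite psE in hs_le ps_le; have [hs hsE gap] := fin_of_close hs_le ps_le.
have q0 : 0 <= enorm scp ^+ 2 := sqr_ge0 _.
have Sq : enorm s ^+ 2 <= theta2 ^+ 2 * enorm scp ^+ 2.
  by rewrite -exprMn ler_pXn2r ?nnegrE ?enorm_ge0 ?mulr_ge0 ?enorm_ge0 // ltW.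
set xi := h0 - dotp g scp - pc.
have Sd : enorm s < d :=
  lt_of_sqr_le_scaled (enorm_ge0 s) d0 w0 (cauchy_sqr _ _ W0w Pcp) Sq Aw.
have far' : eps ^+ 2 < w * xi.
  move: far; rewrite (xi_cp_fin pcE) /= -EFinM lte_fin => /sqr_lt_of_lt_sqrt_mul.
  by apply; rewrite ?ltW.
have dec : kap * xi <= (1 - eta1) * (h0 - (dotp g s + 2^-1 * dotp s (B xs *m s)) - ps).
  rewrite /kap -mulrA; apply: ler_wpM2l; first by rewrite subr_ge0 ltW.
  exact: model_decrease_ge (ltW theta1_gt0) cauchy stepv sig0 Csig.
have wq : w * enorm scp ^+ 2 <= 2 * xi by rewrite /xi; lra.
have CW : 4 * C * theta2 ^+ 2 <= kap * w by rewrite [kap * w]mulrC -ler_pdivrMr.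
have [D0 ND] := ratio_ge_of_small_error eta1_lt1 kap0 theta20 eps0 w0
  (sum_abs_entries_ge0 _) (enorm_ge0 s) q0 dec wq Sq far' CW e1E (err s ps hs Sd psE hsE gap).
by rewrite (rho_fin psE hsE) lee_fin ler_pdivlMr.
Qed.

End LocalModel.

Lemma near_pinfty_regularization {R : realType} (theta1 c C W : R) :
  0 < theta1 -> theta1 < 1 -> \forall sig \near +oo,
    W <= (c + sig) / theta1 /\ 0 <= sig /\ C + sig <= (1 + theta1) / 2 * ((c + sig) / theta1).
Proof.
move=> th0 th1; near=> sig.
have sigW : theta1 * W - c <= sig by near: sig; apply: nbhs_pinfty_ge; rewrite num_real.
have sig0 : 0 <= sig by near: sig; apply: nbhs_pinfty_ge; rewrite num_real.
have sigC : (2 * theta1 * C - (1 + theta1) * c) / (1 - theta1) <= sig.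
  by near: sig; apply: nbhs_pinfty_ge; rewrite num_real.
rewrite ler_pdivrMr ?subr_gt0 // in sigC.
by rewrite mulrA !ler_pdivlMr //; split; [|split]; lra.
Unshelve. all: by end_near.
Qed.

Lemma sigma_update_pos {R : realType} {eta1 eta2 gamma1 gamma2 gamma3 : R} {r : \bar R}
    {sig sig' : R} :
  0 < gamma3 -> 1 < gamma1 ->
  ((eta2%:E <= r)%E -> gamma3 * sig <= sig' <= sig) /\
  ((eta1%:E <= r)%E -> (r < eta2%:E)%E -> sig <= sig' <= gamma1 * sig) /\
  ((r < eta1%:E)%E -> gamma1 * sig <= sig' <= gamma2 * sig) ->
  0 < sig -> 0 < sig'.
Proof.
move=> g3 g1 [very [succ unsucc]] sig0.
have [/very/andP[+ _]|r2] := leP eta2%:E r; first by apply: lt_le_trans; rewrite mulr_gt0.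
have [/succ/(_ r2)/andP[+ _]|r1] := leP eta1%:E r; first exact: lt_le_trans.
by have /andP[+ _] := unsucc r1; apply: lt_le_trans; rewrite mulr_gt0 //; lra.
Qed.

Lemma safeguarded_step {R : realType} {n} {m : 'cV[R]_n -> \bar R} {theta2 : R} {scp st s} :
  1 <= theta2 -> s = (if theta2 * enorm scp < enorm st then scp else st) ->
  (m st <= m scp)%E -> (m s <= m scp)%E /\ enorm s <= theta2 * enorm scp.
Proof.
move=> th2 -> mst; case: ifPn => [_|]; last by rewrite -leNgt.
by split => //; rewrite ler_peMl ?enorm_ge0.
Qed.

Lemma iterates_h_fin {R : realType} {n} {f : 'cV[R]_n -> R} {h : 'cV[R]_n -> \bar R}
    {B : 'cV[R]_n -> 'M[R]_n} {psi : 'cV[R]_n -> 'cV[R]_n -> \bar R}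
    {x s : nat -> 'cV[R]_n} {om : nat -> R} {eta1 : R} :
  0 < eta1 -> eproper h -> (h (x 0%N) < +oo)%E -> (forall y, psi y 0 = h y) ->
  (forall k, (h (x k + s k)%R <= psi (x k) (s k) + (om k)%:E)%E) ->
  (forall k, x k.+1 = if (eta1%:E <= rho f h B psi (x k) (s k))%E then x k + s k else x k) ->
  forall k, h (x k) \is a fin_num.
Proof.
move=> eta1_gt0 h_proper hx0 psi0 h_le xdef.
elim=> [|k hk_fin]; first by rewrite fin_numE h_proper.1 lt_eqF.
rewrite xdef; case: ifP => // succ; rewrite fin_numE h_proper.1 /=; apply/eqP => hinf.
have psinf : psi (x k) (s k) = +oo%E.
  by move: (h_le k); rewrite hinf leye_eq; case: (psi (x k) (s k)).
by move: succ; rewrite /rho psi0 psinf hinf -(fineK hk_fin) /= lee_fin leNgt eta1_gt0.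
Qed.

Theorem theorem5p6 (R : realType) (n : nat)
  (f : 'cV[R]_n -> R) (h : 'cV[R]_n -> \bar R) (B : 'cV[R]_n -> 'M[R]_n)
  (psi : 'cV[R]_n -> 'cV[R]_n -> \bar R) (omega : R -> R)
  (theta1 theta2 eta1 eta2 gamma1 gamma2 gamma3 : R)
  (x : nat -> 'cV[R]_n) (sigma : nat -> R) (scp st s : nat -> 'cV[R]_n) :
  cont_diff f -> eproper h -> elsc h ->
  (forall y, (B y)^T = B y) ->
  (* (MA1) *)
  (forall y, eproper (psi y) /\ elsc (psi y) /\ prox_bounded (psi y) /\
             psi y 0 = h y /\ lim_subdiff (psi y) 0 = lim_subdiff h y) ->
  (* (MA2) *)
  (exists lam : \bar R, (0 < lam)%E /\ forall y, (lam <= prox_threshold (psi y))%E) ->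
  (* (MA3) *)
  (forall t, 0 <= t -> 0 <= omega t) ->
  (fun t => omega t / t) @ 0^'+ --> 0 ->
  (forall k, (h (x k + s k)%R <= psi (x k) (s k) + (omega (enorm (s k)))%:E)%E /\
             (psi (x k) (s k) <= h (x k + s k)%R + (omega (enorm (s k)))%:E)%E) ->
  (* (MA4) *)
  (\sum_(k <oo) ((rk (fun j => B (x j)) k)^-1)%:E = +oo)%E ->
  0 < theta1 -> theta1 < 1 -> 1 < theta2 ->
  0 < eta1 -> eta1 <= eta2 -> eta2 < 1 ->
  0 < gamma3 -> gamma3 <= 1 -> 1 < gamma1 -> gamma1 <= gamma2 ->
  (h (x 0%N) < +oo)%E -> 0 < sigma 0 ->
  let nu k := theta1 / (snorm (B (x k)) + sigma k) in
  let rho_k k := rho f h B psi (x k) (s k) in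
  (forall k, P_cp f psi (nu k)^-1 (x k) (scp k)) ->
  (* trial step st k with model decrease, then safeguard reset *)
  (forall k, (mR2N f B psi (sigma k) (x k) (st k)
              <= mR2N f B psi (sigma k) (x k) (scp k))%E) ->
  (forall k, s k = if theta2 * enorm (scp k) < enorm (st k) then scp k else st k) ->
  (forall k, x k.+1 = if (eta1%:E <= rho_k k)%E then x k + s k else x k) ->
  (forall k,
     ((eta2%:E <= rho_k k)%E -> gamma3 * sigma k <= sigma k.+1 <= sigma k) /\
     ((eta1%:E <= rho_k k)%E -> (rho_k k < eta2%:E)%E ->
        sigma k <= sigma k.+1 <= gamma1 * sigma k) /\
     ((rho_k k < eta1%:E)%E -> gamma1 * sigma k <= sigma k.+1 <= gamma2 * sigma k)) ->
  finite_set [set k | (eta1%:E <= rho_k k)%E] ->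
  (exists xs : 'cV[R]_n, \forall k \near \oo, x k = xs) /\
  limn_einf (fun k => ((Num.sqrt (nu k)^-1)%:E
                       * esqrt (xi_cp f h psi (x k) (scp k)))%E) = 0%E.
Proof.
move=> f_diff h_proper _ _ MA1 _ _ omega_o MA3 _ theta1_gt0 theta1_lt1 theta2_gt1
  eta1_gt0 eta1_le2 eta2_lt1 gamma3_gt0 _ gamma1_gt1 _ hx0 sigma0_gt0 nu rho_k
  Pcp mdec sdef xdef sigdef fin.
have unsucc : \forall k \near \oo, (rho_k k < eta1%:E)%E.
  by move: (finite_set_nat_near_notin fin); apply: filterS => k /negP; rewrite ltNge.
have [xs xsE] : exists xs, \forall k \near \oo, x k = xs.
  by apply: near_stationary; move: unsucc; apply: filterS => k uk; rewrite xdef leNgt uk.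
split; first by exists xs.
have sigma_gt0 k : 0 < sigma k.
  by elim: k => [//|k IH]; apply: sigma_update_pos gamma3_gt0 gamma1_gt1 (sigdef k) IH.
have sigma_cvg : sigma @ \oo --> +oo.
  apply: geometric_growth_cvgy gamma1_gt1 sigma_gt0 _.
  by move: unsucc; apply: filterS => k /(sigdef k).2.2 /andP[].
have h_fin := iterates_h_fin eta1_gt0 h_proper hx0 (fun y => (MA1 y).2.2.2.1)
  (fun k => (MA3 k).1) xdef.
have [psi_proper [_ [psi_prox [psi0 _]]]] := MA1 xs.
have hxs : h xs = (fine (h xs))%:E by have [k <-] := filter_ex xsE; rewrite fineK.
apply: limn_einf_eq0 => [k|e e0 far].
  by rewrite mule_ge0 ?lee_fin ?sqrtr_ge0 ?esqrt_ge0.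
have [W large] := rho_ge_of_large_regularization psi_proper psi0 hxs (B := B)
  theta1_gt0 theta1_lt1 theta2_gt1 eta1_gt0 (le_lt_trans eta1_le2 eta2_lt1) e0
  (f_diff.1 xs) psi_prox omega_o.
have sig_large := sigma_cvg _ (near_pinfty_regularization theta1 (snorm (B xs))
  (sum_abs_entries (B xs)) W theta1_gt0 theta1_lt1).
have [k [[[xk [Wk [sigk0 Csigk]]] uk] fk]] :=
  filter_ex (filterI (filterI (filterI xsE sig_large) unsucc) far).
have nuk : (nu k)^-1 = (snorm (B xs) + sigma k) / theta1 by rewrite /nu xk invf_div.
have Pk := Pcp k; have [mk Sk] := safeguarded_step (ltW theta2_gt1) (sdef k) (mdec k).
have [hk psk] := MA3 k.
rewrite nuk in Pk fk; rewrite /rho_k xk in uk Pk mk hk psk fk.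
by move: uk; rewrite ltNge (large _ _ _ _ Wk sigk0 Csigk Pk mk Sk hk psk fk).
Qed.
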